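(* Assume the setting below. Then for all $s\in\mathbb{R}$ and $\Delta t\ge0$, $$R^*_{M_i}(s+\Delta t)-R^*_{M_i}(s)\le \Big[\Delta t-\frac{\beta_{ST}(\Delta t)}{C}\Big]_\uparrow^+\cdot idSl_{M_i}+c_{M_i}^{max}-c_{M_i}^{min},$$ i.e. $\sigma_{M_i}(t)=[t-\beta_{ST}(t)/C]_\uparrow^+\,idSl_{M_i}+c_{M_i}^{max}-c_{M_i}^{min}$ is a shaping curve for the output of class $M_i$ at the port (non-preemption mode).
   Context: Fix an output port with physical link rate $C>0$. Its gate control list (GCL) is periodic with period $p>0$ and contains $N\ge 1$ scheduled-traffic (ST) windows per period. Window $k\in\{0,\dots,N-1\}$ is the interval $[o_k,o_k+L_k)$, where $0\le o_0<o_1<\dots<o_{N-1}<p$, $L_k\ge 0$, $o_k+L_k\le o_{k+1}$ for $k<N-1$ and $o_{N-1}+L_{N-1}\le o_0+p$. Indices are extended to all integers periodically: $o_{k+N}=o_k+p$, $L_{k+N}=L_k$. Relative offsets are $o_{j,i}=o_j-o_i$. Let $S=\bigcup_{k\in\mathbb Z}[o_k,o_k+L_k)$ and for $s\le t$ let $\Delta t_{ST}(s,t)$ be the Lebesgue measure of $S\cap[s,t]$. Let $g_i=o_i-(o_{i-1}+L_{i-1})$ be the idle gap before window $i$. Define $\beta_{TDMA}(x,L)=C\max\{\lfloor x/p\rfloor L,\ x-\lceil x/p\rceil(p-L)\}$ and $\beta_{ST}(t)=\min_{0\le i\le N-1}\sum_{j=i}^{i+N-1}\beta_{TDMA}\big(t+p-L_j-g_i-o_{j,i},\,L_j\big)$.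 For a function $f$, $[f]_\uparrow^+(t)=\max\{0,\sup_{0\le u\le t}f(u)\}$. AVB class $M_i$ has idle slope $idSl_{M_i}\in(0,C)$ and send slope $sdSl_{M_i}=idSl_{M_i}-C$; $R^*_{M_i}(t)$ is the cumulative number of bits of class $M_i$ transmitted by time $t$ and $c_{M_i}(t)$ its credit. Assumptions: for every interval $[s,s+\Delta t]$, the interval is partitioned into measurable sets $T^+$ (where $c_{M_i}$ increases at rate $idSl_{M_i}$), $T^-$ (exactly the times when a class-$M_i$ frame is being transmitted, where $R^*_{M_i}$ increases at rate $C$ and $c_{M_i}$ changes at rate $sdSl_{M_i}$), and $T^0$ (where $c_{M_i}$ does not increase: it is frozen or reset downward); $R^*_{M_i}$ is constant outside $T^-$; $S\cap[s,s+\Delta t]\subseteq T^0$ (AVB gates closed in ST windows). Constants $c_{M_i}^{min}\le c_{M_i}^{max}$ satisfy $c_{M_i}^{min}\le c_{M_i}(t)\le c_{M_i}^{max}$ for all $t$. *)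

From mathcomp Require Import all_boot all_order all_algebra.
From mathcomp Require Import all_classical all_reals all_analysis.
Set Implicit Arguments. Unset Strict Implicit. Unset Printing Implicit Defensive.
Import Order.TTheory GRing.Theory Num.Theory.
Local Open Scope classical_set_scope.
Local Open Scope ring_scope.

Section TSN.
Variable R : realType.

Definition beta_TDMA (C p : R) (x Lk : R) : R :=
  C * Num.max ((Num.floor (x / p))%:~R * Lk)
              (x - (Num.ceil (x / p))%:~R * (p - Lk)).

Definition gap (o L : int -> R) (i : int) : R := o i - (o (i - 1) + L (i - 1)).

(* The min over the nonempty range 0..N-1 (N >= 1) is taken with the
   i = 0 term as neutral element, which does not change its value. *)
Definition beta_ST_term (C p : R) (N : nat) (o L : int -> R) (t : R) (i : nat) : R :=
  \sum_(i <= j < i + N)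
     beta_TDMA C p (t + p - L j%:Z - gap o L i%:Z - (o j%:Z - o i%:Z)) (L j%:Z).

Definition beta_ST (C p : R) (N : nat) (o L : int -> R) (t : R) : R :=
  \big[Num.min/beta_ST_term C p N o L t 0]_(i < N) beta_ST_term C p N o L t i.

Definition up_plus (f : R -> R) (t : R) : R :=
  Num.max 0 (sup [set f u | u in `[0, t]]).

Definition ST_set (o L : int -> R) : set R :=
  \bigcup_(k in [set: int]) `[o k, o k + L k[%classic.

Definition meas (A : set R) (a b : R) : R :=
  fine (@lebesgue_measure R (A `&` `[a, b]%classic)).

End TSN.

(* Fix an observation interval [s, s + dt].  The hypothesis
   [Hpart] splits it into times Tp (credit grows at idSl), Tm (class M_i is
   transmitted at rate C) and T0 (credit frozen), with the scheduled-traffic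
   (ST) windows contained in T0.  Over the interval the output is C |Tm|, and
   the credit, which stays in [cmin, cmax], changes by at most
   idSl |Tp| + (idSl - C) |Tm|; hence C |Tm| <= idSl (dt - |T0|) + cmax - cmin.
   It remains to bound |T0| from below by the ST time in [s, s + dt], and the
   latter by beta_ST(dt) / C: this is [ST_time_lower], the heart of the file. *)

From mathcomp Require Import all_boot all_order all_algebra.
From mathcomp Require Import all_classical all_reals all_analysis.
From mathcomp Require Import ring lra zify.
Set Implicit Arguments. Unset Strict Implicit. Unset Printing Implicit Defensive.
Import Order.TTheory GRing.Theory Num.Theory.
Local Open Scope classical_set_scope.
Local Open Scope ring_scope.

Section bounded_lebesgue_measure.
Context {R : realType}.
Local Notation lam := (@lebesgue_measure R).

(* Real-valued Lebesgue measure; it is the Lebesgue measure itself on bounded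
   measurable sets, which are the only ones used. *)
Definition mu (X : set R) : R := fine (lam X).

Lemma mu_ge0 (X : set R) : 0 <= mu X.
Proof. exact/fine_ge0/measure_ge0. Qed.

Lemma lam_bounded (X : set R) (a b : R) : measurable X -> X `<=` `[a, b] ->
  lam X = (mu X)%:E.
Proof.
move=> mX sX; rewrite fineK // ge0_fin_numE //.
have le_ab : (lam X <= lam `[a, b])%E by apply: le_measure; rewrite ?inE.
apply: (le_lt_trans le_ab).
by rewrite lebesgue_measure_itv; case: ifP => _ //; rewrite /= ltry.
Qed.

Lemma mu_itv (b1 b2 : bool) (a c : R) : a <= c ->
  mu [set` Interval (BSide b1 a) (BSide b2 c)] = c - a.
Proof.
move=> ac; rewrite /mu lebesgue_measure_itv /= lte_fin.
have [lt_ac|] := ltP a c; first by rewrite -EFinD.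
move=> ca; have -> : a = c by apply/le_anti; rewrite ac ca.
by rewrite subrr.
Qed.

Lemma muU (X Y : set R) (a b : R) : measurable X -> measurable Y ->
  X `&` Y = set0 -> X `<=` `[a, b] -> Y `<=` `[a, b] ->
  mu (X `|` Y) = mu X + mu Y.
Proof.
move=> mX mY XY sX sY; rewrite {1}/mu.
have -> : lam (X `|` Y) = (lam X + lam Y)%E by apply: measureU.
by rewrite (lam_bounded mX sX) (lam_bounded mY sY) -EFinD.
Qed.

Lemma mu_le (X Y : set R) (a b : R) : measurable X -> measurable Y ->
  X `<=` Y -> Y `<=` `[a, b] -> mu X <= mu Y.
Proof.
move=> mX mY XY sY; rewrite -lee_fin.
rewrite -(lam_bounded mX (subset_trans XY sY)) -(lam_bounded mY sY).
by apply: le_measure; rewrite ?inE.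
Qed.

Lemma mu_le_length (X : set R) (a b : R) : measurable X -> X `<=` `[a, b] ->
  a <= b -> mu X <= b - a.
Proof.
move=> mX sX ab; rewrite -(mu_itv true false ab).
by apply: (mu_le (a := a) (b := b) mX _ sX) => //; exact: measurable_itv.
Qed.

Lemma measE (A : set R) (a b : R) : meas A a b = mu (A `&` `[a, b]).
Proof. by []. Qed.

Lemma meas_ge0 (A : set R) (a b : R) : 0 <= meas A a b.
Proof. exact: mu_ge0. Qed.

Lemma meas_le_length (A : set R) (a b : R) : measurable A -> a <= b ->
  meas A a b <= b - a.
Proof.
move=> mA ab; apply: mu_le_length => //; by [exact: measurableI | exact: subIsetr].
Qed.

Lemma meas_mono (A : set R) (a b c d : R) : measurable A -> c <= d ->
  A `&` `[a, b] `<=` A `&` `[c, d] -> meas A a b <= meas A c d.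
Proof.
move=> mA cd sub; rewrite !measE.
by apply: (mu_le _ _ sub (@subIsetr _ _ _)); exact: measurableI.
Qed.

Lemma meas_subset (A B : set R) (a b : R) : measurable A -> measurable B ->
  A `&` `[a, b] `<=` B -> meas A a b <= meas B a b.
Proof.
move=> mA mB sub; rewrite !measE.
apply: (mu_le (a := a) (b := b)); rewrite ?subIsetr //; try exact: measurableI.
by move=> z [Az abz]; split => //; exact: sub.
Qed.

Lemma mu_subadditive (X Y : set R) (a b : R) : measurable X -> measurable Y ->
  X `<=` `[a, b] -> Y `<=` `[a, b] -> mu (X `|` Y) <= mu X + mu Y.
Proof.
move=> mX mY sX sY; rewrite -lee_fin EFinD.
have mXY : measurable (X `|` Y) by exact: measurableU.
have sXY : X `|` Y `<=` `[a, b] by move=> z [/sX|/sY].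
rewrite -(lam_bounded mX sX) -(lam_bounded mY sY) -(lam_bounded mXY sXY).
exact: measureU2.
Qed.

Lemma meas_split_le (A : set R) (a b c : R) : measurable A -> a <= b -> b <= c ->
  meas A a c <= meas A a b + (c - b).
Proof.
move=> mA ab bc; rewrite !measE -(mu_itv true false bc).
have mAab : measurable (A `&` `[a, b]) by exact: measurableI.
have sub_ac : A `&` `[a, c] `<=` (A `&` `[a, b]) `|` `[b, c].
  move=> z [Az]; rewrite /= !in_itv /= => /andP[az zc].
  by case: (leP z b) => zb; [left; split=> //; rewrite /= az | right; rewrite /= (ltW zb) zc].
apply: le_trans (mu_subadditive (a := a) (b := c) mAab (measurable_itv _) _ _).
- apply: (mu_le (a := a) (b := c)) sub_ac _ => //; first exact: measurableI.
    by apply: measurableU => //; exact: measurable_itv.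
  by move=> z [[_]|]; rewrite /= !in_itv /= => /andP[]; lra.
- by move=> z [_]; rewrite /= !in_itv /= => /andP[]; lra.
- by move=> z; rewrite /= !in_itv /= => /andP[]; lra.
Qed.

Lemma meas_split_ge (A : set R) (s a u : R) : measurable A -> s <= a -> a <= u ->
  `[s, a[ `<=` A -> (a - s) + meas A a u <= meas A s u.
Proof.
move=> mA sa au sub; rewrite !measE -(mu_itv true true sa).
have mAau : measurable (A `&` `[a, u]) by exact: measurableI.
rewrite -(muU (a := s) (b := u) (measurable_itv _) mAau).
- apply: (mu_le (a := s) (b := u)); first by apply: measurableU => //; exact: measurable_itv.
  + exact: measurableI.
  + move=> z [zsa | [Az zau]]; split.
    * exact: sub.
    * by move: zsa; rewrite /= !in_itv /= => /andP[]; lra.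
    * by [].
    * by move: zau; rewrite /= !in_itv /= => /andP[]; lra.
  + exact: subIsetr.
- apply/seteqP; split => z // [] /=; rewrite !in_itv /= => /andP[_ za] [_ /andP[az _]].
  by move: (lt_le_trans za az); rewrite ltxx.
- by move=> z /=; rewrite !in_itv /= => /andP[]; lra.
- by move=> z [_] /=; rewrite !in_itv /= => /andP[]; lra.
Qed.

Lemma meas_slide_covered (A : set R) (s a t : R) : measurable A -> 0 <= t ->
  s <= a -> `[s, a[ `<=` A -> meas A a (a + t) <= meas A s (s + t).
Proof.
move=> mA t0 sa sub.
have sst : s <= s + t by rewrite lerDl.
have aat : a <= a + t by rewrite lerDl.
have [sta | ast] := leP (s + t) a.
  have sub_t : `[s, s + t[ `<=` A.
    by move=> z; rewrite /= !in_itv /= => /andP[sz zt]; apply: sub; rewrite /= in_itv /= sz; lra.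
  have := meas_split_ge mA sst (lexx _) sub_t.
  have := meas_le_length mA aat; have := meas_ge0 A (s + t) (s + t); lra.
have := meas_split_ge mA sa (ltW ast) sub.
have := meas_split_le mA (ltW ast) (lerD sa (lexx t)); lra.
Qed.

Lemma meas_slide_gap (A : set R) (a s t : R) : measurable A -> 0 <= t ->
  a <= s -> A `&` `[a, s[ = set0 -> meas A a (a + t) <= meas A s (s + t).
Proof.
move=> mA t0 as_ gap; apply: meas_mono => //; first by rewrite lerDl.
move=> z [Az]; rewrite /= !in_itv /= => /andP[az zat]; split => //.
have [sz | zs] := leP s z; first by rewrite /=; lra.
have : (A `&` `[a, s[) z by split => //=; rewrite ?in_itv /= ?az ?zs.
by rewrite gap => -[].
Qed.

Lemma meas_disjoint_sum (A : set R) (W : nat -> set R) (a b : R) (n : nat) :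
  measurable A -> (forall r, measurable (W r)) -> (forall r, W r `<=` A) ->
  (forall r r', (r < r')%N -> W r `&` W r' = set0) ->
  \sum_(r < n) meas (W r) a b <= meas A a b.
Proof.
move=> mA mW WA dW; pose F (r : 'I_n) := W r `&` `[a, b].
have mF r : measurable (F r) by exact: measurableI.
have sF r : F r `<=` `[a, b] by exact: subIsetr.
have tF : trivIset setT F.
  move=> r r' _ _ [z [[Wz _] [W'z _]]]; apply: val_inj => /=.
  have disj q q' : (q < q')%N -> W q z -> W q' z -> False.
    move=> qq' Wq Wq'; have : (W q `&` W q') z by split.
    by rewrite (dW q q' qq') => -[].
  by case: (ltngtP r r') => // [/disj|/disj]; [move/(_ Wz W'z) | move/(_ W'z Wz)].
have sU : \big[setU/set0]_(r < n) F r `<=` A `&` `[a, b].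
  by elim/big_ind : _ => // [X Y sX sY z [/sX|/sY] //|r _ z [/WA Az abz]].
have mU : measurable (\big[setU/set0]_(r < n) F r) by exact: bigsetU_measurable.
have mAab : measurable (A `&` `[a, b]) by exact: measurableI.
rewrite measE -lee_fin -sumEFin -(lam_bounded mAab (@subIsetr _ _ _)).
have -> : (\sum_(r < n) (meas (W r) a b)%:E = \sum_(r < n) lebesgue_measure (F r))%E.
  by apply: eq_bigr => r _; rewrite (lam_bounded (mF r) (sF r)).
rewrite -measure_bigsetU_ord //.
by apply: le_measure; rewrite ?inE //; exact: measurableI.
Qed.

Lemma meas_partition (X Y Z : set R) (s dt : R) : 0 <= dt ->
  measurable X -> measurable Y -> measurable Z ->
  X `|` Y `|` Z = `[s, s + dt]%classic ->
  X `&` Y = set0 -> X `&` Z = set0 -> Y `&` Z = set0 ->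
  meas X s (s + dt) + meas Y s (s + dt) + meas Z s (s + dt) = dt.
Proof.
move=> dt0 mX mY mZ cover dXY dXZ dYZ.
have sX : X `<=` `[s, s + dt] by rewrite -cover => z Xz; left; left.
have sY : Y `<=` `[s, s + dt] by rewrite -cover => z Yz; left; right.
have sZ : Z `<=` `[s, s + dt] by rewrite -cover => z Zz; right.
rewrite !measE (setIidl sX) (setIidl sY) (setIidl sZ).
rewrite -(muU mX mY dXY sX sY) -(muU (measurableU _ _ mX mY) mZ _ _ sZ).
- by rewrite cover mu_itv ?lerDl // addrAC subrr add0r.
- by rewrite setIUl dXZ dYZ setU0.
- by move=> z [/sX|/sY].
Qed.

Definition overlap (x y a b : R) : R := Num.max 0 (Num.min y b - Num.max x a).

Lemma overlap_le_meas (x y a b : R) : overlap x y a b <= meas `[x, y[ a b.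
Proof.
rewrite /overlap ge_max meas_ge0 /=.
have [le_mm | lt_mm] := leP (Num.max x a) (Num.min y b); last first.
  by apply: le_trans (meas_ge0 _ _ _); rewrite subr_le0 ltW.
rewrite measE -(mu_itv true true le_mm).
apply: (mu_le (a := a) (b := b)); rewrite ?subIsetr //; try exact: measurable_itv.
  by apply: measurableI; exact: measurable_itv.
move=> z; rewrite /= !in_itv /= ge_max lt_min => /andP[/andP[xz az] /andP[zy zb]].
by rewrite xz zy az (ltW zb).
Qed.

Lemma overlap_ge0 (x y a b : R) : 0 <= overlap x y a b.
Proof. by rewrite /overlap le_max lexx. Qed.

Lemma overlap_inside (x y a b : R) : a <= x -> x <= y -> y <= b ->
  overlap x y a b = y - x.
Proof.
move=> ax xy yb; rewrite /overlap (max_idPl ax) (min_idPl yb).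
by apply/max_idPr; rewrite subr_ge0.
Qed.

Lemma overlap_straddle (x y a b : R) : a <= x -> b <= y ->
  overlap x y a b = Num.max 0 (b - x).
Proof. by move=> ax yb; rewrite /overlap (max_idPl ax) (min_idPr yb). Qed.
End bounded_lebesgue_measure.

Section tdma_bound.
Context {R : realType}.

(* [beta_TDMA] without the rate factor: the guaranteed time of a window of
   length Lj, repeated with period p, within any interval of length x. *)
Definition tdma_time (p x Lj : R) : R :=
  Num.max ((Num.floor (x / p))%:~R * Lj) (x - (Num.ceil (x / p))%:~R * (p - Lj)).

Lemma beta_TDMA_time (C p x Lj : R) : beta_TDMA C p x Lj = C * tdma_time p x Lj.
Proof. by []. Qed.

(* Arithmetic core of the TDMA service curve: since ceil(x/p) is floor(x/p) or
   floor(x/p) + 1, the TDMA expression is at most n Lj plus the part of the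
   (n+1)-th slot, n = floor(x/p), that fits into x. *)
Lemma tdma_max_le (p Lj x : R) : 0 < p ->
  tdma_time p x Lj <= (Num.floor (x / p))%:~R * Lj
     + Num.max 0 (x - (Num.floor (x / p))%:~R * p - (p - Lj)).
Proof.
move=> p0; rewrite /tdma_time; have := ceil_ge (x / p); rewrite ceil_floor ler_pdivrMr //.
set n : R := (Num.floor (x / p))%:~R.
set m := Num.max 0 _; have m0 : 0 <= m by rewrite le_max lexx.
have m_ge : x - n * p - (p - Lj) <= m by rewrite le_max lexx orbT.
rewrite ge_max lerDl m0 /=.
by case: (_ \isn't a _) => /=; rewrite intrD -/n => x_le; lra.
Qed.

(* One window class: the copies [S + m p, S + m p + Lj[ (m = 0..M) of a window
   of length Lj overlap an observation interval [A, A + t] starting d after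
   the end S - (p - Lj) of the preceding copy by at least the TDMA amount
   for x = t + d. *)
Lemma tdma_le_overlaps (p Lj d t S A : R) (M : nat) :
  0 < p -> 0 <= Lj -> 0 <= d <= p - Lj -> 0 <= t -> A = S - (p - Lj) + d ->
  Num.floor ((t + d) / p) <= M%:Z ->
  tdma_time p (t + d) Lj <= \sum_(m < M.+1) overlap (S + m%:R * p) (S + m%:R * p + Lj) A (A + t).
Proof.
move=> p0 L0 /andP[d0 dp] t0 eA fM; set x := t + d.
have x0 : 0 <= x by rewrite addr_ge0.
have [n fn] : exists n : nat, Num.floor (x / p) = n%:Z.
  by exists `|Num.floor (x / p)|%N; rewrite gez0_abs // floor_ge0 divr_ge0 // ltW.
have nM : (n <= M)%N by rewrite -lez_nat -fn.
have n_le : n%:R * p <= x by have := floor_le (x / p); rewrite fn ler_pdivlMr.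
have lt_n1 : x < (n%:R + 1) * p.
  by have := floorD1_gt (x / p); rewrite fn intrD ltr_pdivrMr.
apply: (le_trans (tdma_max_le Lj x p0)); rewrite fn.
pose F m := overlap (S + m%:R * p) (S + m%:R * p + Lj) A (A + t).
rewrite -(big_mkord xpredT F) (big_cat_nat (n := n)) //=; last exact: leqW.
rewrite [\sum_(n <= i < M.+1) _]big_ltn ?ltnS // addrA -[X in X <= _]addr0.
apply: lerD; first apply: lerD.
- rewrite (eq_big_nat _ _ (F2 := fun=> Lj)) ?sumr_const_nat ?subn0 ?mulr_natl //.
  move=> m /andP[_ mn]; have mn1 : m%:R + 1 <= n%:R :> R by rewrite natr1 ler_nat.
  have : 0 <= m%:R * p by rewrite mulr_ge0 // ltW.
  have : (m%:R + 1) * p <= n%:R * p by rewrite ler_pM2r.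
  rewrite /x in n_le; move=> *; rewrite /F overlap_inside; lra.
- have : 0 <= n%:R * p by rewrite mulr_ge0 // ltW.
  rewrite /x in lt_n1 *; move=> *; rewrite /F overlap_straddle; [|lra|lra].
  have -> : A + t - (S + n%:R * p) = t + d - n%:R * p - (p - Lj) by rewrite eA; lra.
  exact: lexx.
- by apply: sumr_ge0 => m _; exact: overlap_ge0.
Qed.
End tdma_bound.

Lemma beta_ST_le_term {R : realType} (C p : R) (N : nat) (o L : int -> R)
    (t : R) (i : nat) :
  (i < N)%N -> beta_ST C p N o L t <= beta_ST_term C p N o L t i.
Proof.
by move=> iN; exact: (bigmin_le _ (Ordinal iN) (fun j : 'I_N => beta_ST_term C p N o L t j)).
Qed.

Lemma beta_ST_term_div {R : realType} (C p : R) (N : nat) (o L : int -> R)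
    (t : R) (i : nat) : C != 0 ->
  beta_ST_term C p N o L t i / C = \sum_(i <= j < i + N)
    tdma_time p (t + p - L j%:Z - gap o L i%:Z - (o j%:Z - o i%:Z)) (L j%:Z).
Proof.
move=> C0; rewrite /beta_ST_term.
under eq_bigr do rewrite beta_TDMA_time.
by rewrite -mulr_sumr mulrC mulKf.
Qed.

Lemma ST_measurable {R : realType} (o L : int -> R) : measurable (ST_set o L).
Proof.
apply: countable_bigcupT_measurable => [|k]; first exact: countableP.
exact: measurable_itv.
Qed.

Lemma up_plus_ge {R : realType} (f : R -> R) (t B : R) : 0 <= t ->
  (forall u, 0 <= u <= t -> f u <= B) -> f t <= up_plus f t.
Proof.
move=> t0 fB; rewrite /up_plus le_max; apply/orP; right.
apply: ub_le_sup; last by exists t => //; rewrite /= in_itv /= lexx t0.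
by exists B => _ [u ut <-]; apply: fB; move: ut; rewrite /= in_itv.
Qed.

Lemma quasi_periodic {R : realType} (f : int -> R) (N : int) (c : R) :
  (forall k, f (k + N) = f k + c) -> forall q m, f (m + q * N) = f m + q%:~R * c.
Proof.
move=> fN q m; elim/int_ind: q => [|n IH|n IH]; first by rewrite !mul0r !addr0.
  have -> : m + n.+1%:Z * N = (m + n%:Z * N) + N by rewrite intS; ring.
  by rewrite fN IH intS intrD; ring.
have := fN (m + - n.+1%:Z * N).
have -> : m + - n.+1%:Z * N + N = m + - n%:Z * N by rewrite intS; ring.
by rewrite IH intS !intrN intrD; lra.
Qed.

Lemma sum_nat_blocks {V : zmodType} (g : nat -> V) (M N : nat) :
  \sum_(0 <= r < M * N) g r = \sum_(0 <= m < M) \sum_(0 <= j < N) g (m * N + j)%N.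
Proof.
elim: M => [|M IH]; first by rewrite mul0n !big_geq.
rewrite big_nat_recr //= -IH mulSnr (big_cat_nat (n := (M * N)%N)) ?leq_addr //=.
congr (_ + _); rewrite -{1}(add0n (M * N)%N) big_addn addKn.
by apply: eq_bigr => j _; rewrite addnC.
Qed.

Lemma consecutive_bracket {R : realType} (f : int -> R) (s : R) (b : int) (n : nat) :
  f b <= s -> s < f (b + n%:Z) -> exists k : int, f (k - 1) <= s /\ s < f k.
Proof.
move=> fb; elim: n => [|n IH]; first by rewrite addr0 => /(le_lt_trans fb); rewrite ltxx.
move=> s_lt; have [fbn | ?] := lerP (f (b + n%:Z)) s; last exact: IH.
by exists (b + n.+1%:Z); rewrite (_ : _ - 1 = b + n%:Z) //; lia.
Qed.

Section periodic_schedule.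
Variables (R : realType) (p : R) (N : nat) (o L : int -> R).
Hypotheses (Hp : 0 < p) (HN : (1 <= N)%N) (HL : forall k, 0 <= L k).
Hypothesis Hdisj : forall k : nat, (k.+1 < N)%N -> o k%:Z + L k%:Z <= o k.+1%:Z.
Hypothesis Hwrap : o (N.-1)%:Z + L (N.-1)%:Z <= o 0 + p.
Hypotheses (Hoper : forall k, o (k + N%:Z) = o k + p)
           (HLper : forall k, L (k + N%:Z) = L k).

Lemma o_shift (q m : int) : o (m + q * N%:Z) = o m + q%:~R * p.
Proof. exact: quasi_periodic. Qed.

Lemma L_shift (q m : int) : L (m + q * N%:Z) = L m.
Proof.
rewrite (@quasi_periodic _ L N%:Z 0) ?mulr0 ?addr0 // => k.
by rewrite HLper addr0.
Qed.

Lemma index_decomp (k : int) : exists (q : int) (i : nat), k = i%:Z + q * N%:Z /\ (i < N)%N.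
Proof.
have N0 : N%:Z != 0 by rewrite eqz_nat -lt0n.
exists (k %/ N%:Z)%Z, `|(k %% N%:Z)%Z|%N; rewrite gez0_abs ?modz_ge0 //.
split; first by rewrite addrC -divz_eq.
by rewrite -ltz_nat gez0_abs ?modz_ge0 // ltz_pmod // ltz_nat.
Qed.

Lemma window_end_le_next (m : int) : o m + L m <= o (m + 1).
Proof.
have [q [i [-> iN]]] := index_decomp m.
rewrite -addrAC !o_shift L_shift addrAC lerD2r.
have [iN1 | Ni] := ltnP i.+1 N; first by have := Hdisj iN1; rewrite -addn1 PoszD.
have -> : i = N.-1 by lia.
by rewrite (_ : _ + 1 = 0 + N%:Z) ?Hoper //; lia.
Qed.

Lemma window_end_le (m m' : int) : m < m' -> o m + L m <= o m'.
Proof.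
move=> lt_mm'; have [k ->] : exists k : nat, m' = m + k.+1%:Z.
  by exists `|(m' - m - 1)%R|%N; rewrite -addn1 PoszD gez0_abs; lia.
elim: k => [|k IH]; first exact: window_end_le_next.
have := window_end_le_next (m + k.+1%:Z).
rewrite (_ : _ + 1 = m + k.+2%:Z); last by lia.
by have := HL (m + k.+1%:Z); lra.
Qed.

Lemma o_mono (m m' : int) : m <= m' -> o m <= o m'.
Proof.
rewrite le_eqVlt => /orP[/eqP-> // | lt_mm'].
by apply: le_trans (window_end_le lt_mm'); rewrite lerDl.
Qed.

Lemma window_end_mono (m m' : int) : m <= m' -> o m + L m <= o m' + L m'.
Proof.
rewrite le_eqVlt => /orP[/eqP-> // | lt_mm'].
by apply: le_trans (window_end_le lt_mm') _; rewrite lerDl.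
Qed.

Lemma window_bracket (s : R) : exists k : int, o (k - 1) <= s /\ s < o k.
Proof.
set q := Num.floor ((s - o 0) / p).
apply: (@consecutive_bracket _ o s (q * N%:Z) N).
  rewrite -[q * _]add0r o_shift.
  by have := floor_le ((s - o 0) / p); rewrite ler_pdivlMr //; lra.
rewrite (_ : _ + _ = 0 + (q + 1) * N%:Z); last by ring.
by rewrite o_shift; have := floorD1_gt ((s - o 0) / p); rewrite ltr_pdivrMr // intrD; lra.
Qed.

(* The offset [p - L_j - g_i - o_{j,i}] of beta_ST is the distance from the end
   of window j to the end of window i - 1 + N, so it lies in [0, p - L_j]. *)
Lemma offset_bounds (i j : nat) : (i <= j < i + N)%N ->
  0 <= p - L j%:Z - gap o L i%:Z - (o j%:Z - o i%:Z) <= p - L j%:Z.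
Proof.
move=> /andP[ij jiN]; rewrite /gap; apply/andP; split.
  have := @window_end_mono j%:Z (i%:Z - 1 + N%:Z) ltac:(lia).
  by rewrite Hoper HLper; lra.
by have := @window_end_le (i%:Z - 1) j%:Z ltac:(lia); lra.
Qed.

(* The windows k, ..., k + n - 1 are disjoint pieces of the ST set, so their
   overlaps with an observation interval add up to at most its ST time. *)
Lemma window_overlaps_le (k : int) (n : nat) (a b : R) :
  \sum_(0 <= r < n) overlap (o (k + r%:Z)) (o (k + r%:Z) + L (k + r%:Z)) a b
  <= meas (ST_set o L) a b.
Proof.
rewrite big_mkord.
pose W (r : nat) := `[o (k + r%:Z), o (k + r%:Z) + L (k + r%:Z)[%classic.
have W_disj r r' : (r < r')%N -> W r `&` W r' = set0.
  move=> rr'; apply/seteqP; split => z // [] /=.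
  rewrite /W /= !in_itv /= => /andP[_ z_lt] /andP[le_z _].
  by have := @window_end_le (k + r%:Z) (k + r'%:Z) ltac:(lia); lra.
apply: le_trans (meas_disjoint_sum a b n (ST_measurable o L) _ _ W_disj).
- by apply: ler_sum => r _; exact: overlap_le_meas.
- by move=> r; exact: measurable_itv.
- by move=> r z Wz; exists (k + r%:Z).
Qed.
(* The i-th term of beta_ST is dominated by the overlaps of the windows
   k = i + q N, k + 1, ... with [A, A + t], where A is the end of window k - 1:
   each window class j (i <= j < i + N) contributes its TDMA time for the
   interval length t extended by the offset of j. *)
Lemma tdma_terms_le_overlaps (i : nat) (q : int) (t : R) (M : nat) :
  (i < N)%N -> 0 <= t -> Num.floor ((t + p) / p) <= M%:Z ->
  \sum_(i <= j < i + N)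
     tdma_time p (t + p - L j%:Z - gap o L i%:Z - (o j%:Z - o i%:Z)) (L j%:Z)
  <= \sum_(0 <= r < M.+1 * N)
       overlap (o (i%:Z + q * N%:Z + r%:Z))
               (o (i%:Z + q * N%:Z + r%:Z) + L (i%:Z + q * N%:Z + r%:Z))
               (o i%:Z - gap o L i%:Z + q%:~R * p)
               (o i%:Z - gap o L i%:Z + q%:~R * p + t).
Proof.
move=> iN t0 fM.
set A := o i%:Z - gap o L i%:Z + q%:~R * p; set k := i%:Z + q * N%:Z.
rewrite sum_nat_blocks exchange_big_nat /=.
rewrite -{1}[i]add0n big_addn addKn.
apply: ler_sum_nat => j' /andP[_ j'N]; set j := (j' + i)%N.
have d_bounds := @offset_bounds i j ltac:(lia).
set d := p - L j%:Z - _ - _ in d_bounds; have /andP[_ dp] := d_bounds.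
rewrite (_ : t + p - _ - _ - _ = t + d); last by rewrite /d; lra.
have eA : A = o j%:Z + q%:~R * p - (p - L j%:Z) + d by rewrite /A /d; lra.
have fdM : Num.floor ((t + d) / p) <= M%:Z.
  apply: le_trans (le_floor _) fM; rewrite ler_pM2r ?invr_gt0 //.
  by have := HL j%:Z; lra.
apply: (le_trans (tdma_le_overlaps Hp (HL _) d_bounds t0 eA fdM)).
rewrite big_mkord; apply: ler_sum => m _.
have -> : k + (m * N + j')%N%:Z = j%:Z + (q + m%:Z) * N%:Z by rewrite /k /j; lia.
by rewrite o_shift L_shift intrD mulrDl addrA.
Qed.
Lemma beta_ST_ge0 (C t : R) : 0 < C -> 0 <= t -> 0 <= beta_ST C p N o L t.
Proof.
move=> C0 t0; apply: le_bigmin => [|i _]; rewrite /beta_ST_term big_nat_cond;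
  apply: sumr_ge0 => j /andP[ijN _]; rewrite beta_TDMA_time mulr_ge0 ?(ltW C0) //;
  rewrite le_max mulr_ge0 ?HL ?ler0z ?floor_ge0 ?divr_ge0 ?(ltW Hp) //.
all: by have /andP[+ _] := offset_bounds ijN; lra.
Qed.

Lemma ST_idle (k : int) (s : R) : s < o k ->
  ST_set o L `&` `[o (k - 1) + L (k - 1), s[ = set0.
Proof.
move=> s_lt; apply/seteqP; split => z // [[m _]] /=.
rewrite !in_itv /= => /andP[om zm] /andP[az zs].
have [m_le | k_le] := lerP m (k - 1).
  by have := window_end_mono m_le; lra.
have := o_mono (m := k) (m' := m) ltac:(lia); lra.
Qed.

Lemma ST_time_lower (C s t : R) : 0 < C -> 0 <= t ->
  beta_ST C p N o L t / C <= meas (ST_set o L) s (s + t).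
Proof.
move=> C0 t0; have [k [before after]] := window_bracket s.
have [q [i [ek iN]]] := index_decomp k.
set a := o (k - 1) + L (k - 1).
have mS := ST_measurable o L.
have slide : meas (ST_set o L) a (a + t) <= meas (ST_set o L) s (s + t).
  have [a_le | s_lt] := lerP a s; first exact: meas_slide_gap (ST_idle after).
  apply: meas_slide_covered => //; first exact: ltW.
  move=> z; rewrite /= in_itv /= => /andP[sz za]; exists (k - 1) => //.
  by rewrite /= in_itv /=; apply/andP; split; rewrite /a in za; lra.
have ea : a = o i%:Z - gap o L i%:Z + q%:~R * p.
  rewrite /a /gap (_ : k - 1 = (i%:Z - 1) + q * N%:Z); last by rewrite ek; ring.
  by rewrite o_shift L_shift; lra.
have [M fM] : exists M : nat, Num.floor ((t + p) / p) = M%:Z.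
  exists `|Num.floor ((t + p) / p)|%N; rewrite gez0_abs // floor_ge0.
  by rewrite divr_ge0 ?addr_ge0 // ltW.
apply: le_trans slide; rewrite ea.
apply: le_trans (window_overlaps_le (i%:Z + q * N%:Z) (M.+1 * N) _ _).
apply: le_trans (tdma_terms_le_overlaps q iN t0 ltac:(by rewrite fM)).
rewrite -(@beta_ST_term_div _ C) ?gt_eqF // ler_pM2r ?invr_gt0 //.
exact: beta_ST_le_term.
Qed.
End periodic_schedule.

Theorem theorem5 (R : realType)
  (* port rate and GCL *)
  (C p : R) (N : nat) (o L : int -> R)
  (HC : 0 < C) (Hp : 0 < p) (HN : (1 <= N)%N)
  (Ho0 : 0 <= o 0)
  (Hoinc : forall k : nat, (k.+1 < N)%N -> o k%:Z < o k.+1%:Z)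
  (HoN : o (N.-1)%:Z < p)
  (HL : forall k : int, 0 <= L k)
  (Hdisj : forall k : nat, (k.+1 < N)%N -> o k%:Z + L k%:Z <= o k.+1%:Z)
  (Hwrap : o (N.-1)%:Z + L (N.-1)%:Z <= o 0 + p)
  (Hoper : forall k : int, o (k + N%:Z) = o k + p)
  (HLper : forall k : int, L (k + N%:Z) = L k)
  (* AVB class M_i *)
  (idSl : R) (Hid : 0 < idSl < C)
  (Rstar c : R -> R) (cmin cmax : R)
  (Hcmin : cmin <= cmax)
  (Hcb : forall t, cmin <= c t <= cmax)
  (Hpart : forall (s dt : R), 0 <= dt ->
     exists Tp Tm T0 : set R,
       [/\ measurable Tp /\ measurable Tm /\ measurable T0,
           Tp `|` Tm `|` T0 = `[s, s + dt]%classic,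
           Tp `&` Tm = set0 /\ Tp `&` T0 = set0 /\ Tm `&` T0 = set0,
           ST_set o L `&` `[s, s + dt]%classic `<=` T0 &
           forall a b, s <= a -> a <= b -> b <= s + dt ->
             Rstar b - Rstar a = C * meas Tm a b /\
             c b - c a <= idSl * meas Tp a b + (idSl - C) * meas Tm a b]) :
  forall (s dt : R), 0 <= dt ->
    Rstar (s + dt) - Rstar s <=
      up_plus (fun t => t - beta_ST C p N o L t / C) dt * idSl + cmax - cmin.
Proof.
move=> s dt dt0.
have [Tp [Tm [T0 [[mTp [mTm mT0]] cover [dTpm [dTp0 dTm0]] ST_T0 flow]]]] :=
  Hpart s dt dt0.
have [R_flow c_flow] := flow s (s + dt) (lexx s) ltac:(by rewrite lerDl) (lexx _).
have total := meas_partition dt0 mTp mTm mT0 cover dTpm dTp0 dTm0.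
have ST_le_T0 := meas_subset (ST_measurable o L) mT0 ST_T0.
have ST_lower := ST_time_lower Hp HN HL Hdisj Hwrap Hoper HLper s HC dt0.
have beta_le u : 0 <= u <= dt -> u - beta_ST C p N o L u / C <= dt.
  move=> /andP[u0 ud].
  have beta0 := beta_ST_ge0 Hp HN HL Hdisj Hwrap Hoper HLper HC u0.
  by have := divr_ge0 beta0 (ltW HC); lra.
have shaped := up_plus_ge dt0 beta_le.
have [id0 idC] := andP Hid; have [c0_lo c0_hi] := andP (Hcb s).
have [c1_lo c1_hi] := andP (Hcb (s + dt)).
(* idSl (|Tp| + |Tm|) = idSl (dt - |T0|) <= idSl (dt - beta_ST(dt) / C). *)
have served : idSl * (meas Tp s (s + dt) + meas Tm s (s + dt)) <=
    up_plus (fun t => t - beta_ST C p N o L t / C) dt * idSl.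
  by rewrite mulrC ler_wpM2r ?(ltW id0) //; lra.
(* Output C |Tm| = idSl (|Tp| + |Tm|) - (credit change) <= served + cmax - cmin. *)
by move: served; rewrite R_flow mulrDr; move: c_flow; rewrite mulrBl; lra.
Qed.
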